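(* Let $A\in\mathbb{R}^{n\times n}$, $B\in\mathbb{R}^{n\times m}$ with $(A,B)$ stabilizable, $Q\succ0$, $R\succ0$, $\alpha>1$, $\gamma,\eta\ge0$, $x_k\in\mathbb{R}^n$, and let $\tilde P$, $V$, $J_k$, $Z$, $H_0,H_1,H_2$ be as in the context. The optimization problem (P1): minimize over $F_k\in\mathbb{R}^{m\times n}$, $\delta_k$ the objective $-\delta_k+\gamma\|F_k\|_0+\eta\|F_kx_k\|_0$ subject to $J_k(F_k,\xi;x_k)\le\alpha\big(V(x_k)-V(x(t_k+\xi))\big)$ for all $\xi\in[0,\delta_k]$, is equivalent to the problem (P2): minimize over $f_k\in\mathbb{R}^{mn}$, $\delta_k$ the objective $-\delta_k+\gamma\|f_k\|_0+\eta\|(x_k^T\otimes I)f_k\|_0$ subject to, for all $\xi\in[0,\delta_k)$, $$\tfrac12 f_k^TP_1(\xi)f_k+q_1(\xi)^Tf_k+r_1(\xi)\le0,$$ where $f_k:=\mathrm{vec}(F_k)$ and $$P_1(\xi):=2(x_kx_k^T)\otimes\big(H_2(\xi)+\alpha B^TZ(\xi)^Te^{A^T\xi}\tilde Pe^{A\xi}Z(\xi)B\big),$$ $$q_1(\xi):=2\,\mathrm{vec}\Big(\big(H_1(\xi)^T+\alpha B^TZ(\xi)^Te^{A^T\xi}\tilde Pe^{A\xi}\big)x_kx_k^T\Big),$$ $$r_1(\xi):=x_k^T\big(H_0(\xi)+\alpha(e^{A^T\xi}\tilde Pe^{A\xi}-\tilde P)\big)x_k.$$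
   Context: $\tilde F$ is a fixed gain with $A+B\tilde F$ Hurwitz and $\tilde P\succ0$ solves $(A+B\tilde F)^T\tilde P+\tilde P(A+B\tilde F)+Q+\tilde F^TR\tilde F=0$; $V(x):=x^T\tilde Px$. For $\xi\ge0$, $x(t_k+\xi)$ is the solution of $\dot x=Ax+Bu$ from $x(t_k)=x_k$ with constant input $u=F_kx_k$, and $J_k(F_k,\xi;x_k):=\int_{t_k}^{t_k+\xi}(x^TQx+u^TRu)\,dt$. $Z(\tau):=\int_0^\tau e^{-As}ds$, $H_0(\xi):=\int_0^\xi e^{A^T\tau}Qe^{A\tau}d\tau$, $H_1(\xi):=\int_0^\xi e^{A^T\tau}Qe^{A\tau}Z(\tau)Bd\tau$, $H_2(\xi):=\int_0^\xi(e^{A\tau}Z(\tau)B)^TQ(e^{A\tau}Z(\tau)B)d\tau+\xi R$. $\|\cdot\|_0$ is the number of nonzero entries, $\mathrm{vec}$ stacks columns, $\otimes$ is the Kronecker product, and $I$ is the $m\times m$ identity. *)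

From HB Require Import structures.
From mathcomp Require Import all_boot all_order all_algebra.
From mathcomp Require Import all_classical all_reals all_analysis.
From mathcomp Require Import complex mxtens.

Set Implicit Arguments.
Unset Strict Implicit.
Unset Printing Implicit Defensive.

Import Order.TTheory GRing.Theory Num.Theory.
Import numFieldNormedType.Exports.
Local Open Scope ring_scope.
Local Open Scope complex_scope.
Local Open Scope classical_set_scope.

Section Defs.
Variable R : realType.

Definition quad n (M : 'M[R]_n) (x : 'cV[R]_n) : R := (x^T *m M *m x) 0 0.

Definition posdef n (M : 'M[R]_n) : Prop :=
  M^T = M /\ forall x : 'cV[R]_n, x != 0 -> 0 < quad M x.

Definition hurwitz n (M : 'M[R]_n) : Prop :=
  forall lam : R[i], eigenvalue (map_mx (fun r : R => (r%:C)%C) M) lam ->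
    Re lam < 0.

Definition stabilizable n m (A : 'M[R]_n) (B : 'M[R]_(n, m)) : Prop :=
  exists F : 'M[R]_(m, n), hurwitz (A + B *m F).

Definition expm n (t : R) (M : 'M[R]_n) : 'M[R]_n :=
  \matrix_(i, j) limn (fun N : nat =>
     (\sum_(k < N) ((t ^+ k / (k`!)%:R) *: M ^+ k)) i j).

Definition mxint p q (xi : R) (f : R -> 'M[R]_(p, q)) : 'M[R]_(p, q) :=
  \matrix_(i, j) Rintegral (@lebesgue_measure R) `[0, xi] (fun t => f t i j).

Variables (n m : nat) (A : 'M[R]_n) (B : 'M[R]_(n, m)) (Q : 'M[R]_n)
  (Rc : 'M[R]_m).

Definition Zm (tau : R) : 'M[R]_n := mxint tau (fun s => expm (- s) A).

Definition H0 (xi : R) : 'M[R]_n :=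
  mxint xi (fun tau => (expm tau A)^T *m Q *m expm tau A).

Definition H1 (xi : R) : 'M[R]_(n, m) :=
  mxint xi (fun tau => (expm tau A)^T *m Q *m expm tau A *m Zm tau *m B).

Definition H2 (xi : R) : 'M[R]_m :=
  mxint xi (fun tau => (expm tau A *m Zm tau *m B)^T *m Q
                        *m (expm tau A *m Zm tau *m B)) + xi *: Rc.

End Defs.

Definition nnz (R : realType) p q (M : 'M[R]_(p, q)) : nat :=
  #|[set ij : 'I_p * 'I_q | M ij.1 ij.2 != 0]|.

(* vec: stacks the columns; entry of index j*m + i is F i j *)
Definition vec (R : realType) m n (F : 'M[R]_(m, n)) : 'cV[R]_(n * m) :=
  \col_k F (mxtens_unindex k).2 (mxtens_unindex k).1.

From HB Require Import structures.
From mathcomp Require Import all_boot all_order all_algebra.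
From mathcomp Require Import all_classical all_reals all_analysis.
From mathcomp Require Import complex mxtens.
From mathcomp Require Import ring.
Import Order.TTheory GRing.Theory Num.Theory.
Import numFieldNormedType.Exports.
Local Open Scope ring_scope.
Local Open Scope classical_set_scope.
Set Implicit Arguments.
Unset Strict Implicit.
Unset Printing Implicit Defensive.

(* Along the constant input u = F x_k the state is x(t) = e^{tA} (x_k + Z(t) B u),
   because s |-> e^{-sA} x(s) has derivative e^{-sA} B u.  Substituting this, both
   the running cost J(F, xi) and the Lyapunov decrease V(x_k) - V(x(xi)) become
   quadratic forms in (x_k, u) whose matrices are H0, H1, H2 and e^{xi A^T} Pt e^{xi A}.
   The Kronecker identities (M (x) N) vec X = vec (N X M^T) and
   vec(G)^T vec(F) = tr (G^T F) rewrite them as a quadratic function of f = vec F,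
   and u = (x_k^T (x) I) f = vec (F x_k) gives the objective.  Finally the range
   [0, delta] of (P1) can be replaced by the range [0, delta) of (P2) because the
   constraint is continuous in xi and holds trivially at xi = 0. *)

Section MatrixDerivative.
Variable R : realType.

Definition is_derive_mx p q (t : R) (M : R -> 'M[R]_(p, q)) (dM : 'M[R]_(p, q)) :=
  forall i j, is_derive t (1 : R) (fun s => M s i j) (dM i j).

Lemma is_derive_mx_mul p q r (M : R -> 'M[R]_(p, q)) (N : R -> 'M[R]_(q, r))
    (dM : 'M[R]_(p, q)) (dN : 'M[R]_(q, r)) t :
  is_derive_mx t M dM -> is_derive_mx t N dN ->
  is_derive_mx t (fun s => M s *m N s) (dM *m N t + M t *m dN).
Proof.
move=> DM DN i j.
have -> : (fun s => (M s *m N s) i j) = \sum_(l < q) (fun s => M s i l * N s l j).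
  by apply/funext => s; rewrite fct_sumE mxE.
apply: is_derive_eq; first exact: is_derive_sum (fun l => is_deriveM (DM i l) (DN l j)).
rewrite !mxE -big_split /=; apply: eq_bigr => l _.
by rewrite /GRing.scale /= addrC mulrC [N t l j * _]mulrC.
Qed.

Lemma is_derive_mx_continuous p q (M : R -> 'M[R]_(p, q)) :
  (forall t, exists dM, is_derive_mx t M dM) ->
  forall i j, continuous (fun s => M s i j).
Proof.
move=> DM i j t; have [dM /(_ i j) [+ _]] := DM t.
by move=> /derivable1_diffP/differentiable_continuous.
Qed.

End MatrixDerivative.

Lemma limn_mulmxl (R : realType) p q r (C : 'M[R]_(p, q)) (S : nat -> 'M[R]_(q, r)) :
  (forall i j, cvgn (fun N => S N i j)) ->
  forall i j, limn (fun N => (C *m S N) i j)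
              = (C *m \matrix_(i, j) limn (fun N => S N i j)) i j.
Proof.
move=> cvgS i j; apply/cvg_lim => //; rewrite mxE.
under eq_fun do rewrite mxE.
apply: cvg_big => // [|l _]; first exact: add_continuous.
by rewrite mxE; apply: cvgMr.
Qed.

Lemma limn_mulmxr (R : realType) p q r (S : nat -> 'M[R]_(p, q)) (C : 'M[R]_(q, r)) :
  (forall i j, cvgn (fun N => S N i j)) ->
  forall i j, limn (fun N => (S N *m C) i j)
              = (\matrix_(i, j) limn (fun N => S N i j) *m C) i j.
Proof.
move=> cvgS i j; apply/cvg_lim => //; rewrite mxE.
under eq_fun do rewrite mxE.
apply: cvg_big => // [|l _]; first exact: add_continuous.
by rewrite mxE; apply: cvgMl.
Qed.

Section MatrixExponential.
Variables (R : realType) (n : nat) (A : 'M[R]_n).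

Definition expm_sum (t : R) (N : nat) : 'M[R]_n :=
  \sum_(k < N) (t ^+ k / k`!%:R) *: A ^+ k.

Definition expm_coef p (i j : 'I_n) (k : nat) : R := (A ^+ (k + p)) i j / k`!%:R.

Lemma norm_expr_entry_le k i j :
  `|(A ^+ k) i j| <= (\sum_(l < n) \sum_(j < n) `|A l j|) ^+ k.
Proof.
set c := \sum_(l < n) _.
have c_ge0 : 0 <= c by apply: sumr_ge0 => l _; apply: sumr_ge0.
elim: k i j => [|k IHk] i j.
  by rewrite expr0 mxE; case: (i == j); rewrite ?normr1 ?normr0.
rewrite exprSr -mulmxE mxE; apply: (le_trans (ler_norm_sum _ _ _)).
apply: (@le_trans _ _ (\sum_(l < n) c ^+ k * `|A l j|)).
  by apply: ler_sum => l _; rewrite normrM ler_wpM2r.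
rewrite -mulr_sumr exprSr ler_wpM2l ?exprn_ge0 //.
apply: ler_sum => l _; rewrite (bigD1 j) //= lerDl.
exact: sumr_ge0.
Qed.

Lemma expm_coef_cvg p i j t : cvgn (pseries (expm_coef p i j) t).
Proof.
set c := \sum_(l < n) \sum_(j < n) `|A l j|.
have c_ge0 : 0 <= c by apply: sumr_ge0 => l _; apply: sumr_ge0.
apply: normed_cvg.
apply: (@series_le_cvg _ _ (c ^+ p *: exp_coeff (c * `|t|))) => [k|k|k|].
- exact: normr_ge0.
- by rewrite /= mulr_ge0 ?exprn_ge0 ?divr_ge0 ?exprn_ge0 ?mulr_ge0.
- rewrite /= /expm_coef !normrM normfV normr_nat normrX.
  have -> : (c ^+ p *: exp_coeff (c * `|t|)) k = c ^+ (k + p) / k`!%:R * `|t| ^+ k.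
    transitivity (c ^+ p * ((c * `|t|) ^+ k / k`!%:R)); first by [].
    by rewrite exprMn exprD; ring.
  by rewrite ler_wpM2r ?exprn_ge0 // ler_wpM2r ?invr_ge0 // norm_expr_entry_le.
- exact/is_cvg_seriesZ/is_cvg_series_exp_coeff.
Qed.

Lemma pseries_diffs_expm_coef p i j :
  pseries_diffs (expm_coef p i j) = expm_coef p.+1 i j.
Proof.
apply/funext => k; rewrite /pseries_diffs /expm_coef factS natrM addSnnS.
have k1_neq0 : (k.+1%:R : R) != 0 by rewrite pnatr_eq0.
have kf_neq0 : (k`!%:R : R) != 0 by rewrite pnatr_eq0 -lt0n fact_gt0.
by field; rewrite kf_neq0 addrC natr1 k1_neq0.
Qed.

Lemma pseries_expm_coef p i j t N :
  pseries (expm_coef p i j) t N = (A ^+ p *m expm_sum t N) i j.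
Proof.
rewrite /pseries /series /= big_mkord mulmx_sumr summxE.
apply: eq_bigr => k _.
rewrite -scalemxAr mxE mulmxE -exprD addnC.
by rewrite /expm_coef; ring.
Qed.

Lemma expm_sum_cvg t i j : cvgn (fun N => expm_sum t N i j).
Proof.
suff <- : pseries (expm_coef 0 i j) t = fun N => expm_sum t N i j.
  exact: expm_coef_cvg.
by apply/funext => N; rewrite pseries_expm_coef expr0 mul1mx.
Qed.

Lemma expmE t i j : expm t A i j = limn (pseries (expm_coef 0 i j) t).
Proof.
rewrite mxE; congr (limn _); apply/funext => N.
by rewrite pseries_expm_coef expr0 mul1mx.
Qed.

Lemma mulmx_expmC t : A *m expm t A = expm t A *m A.
Proof.
have sum_comm N : A *m expm_sum t N = expm_sum t N *m A.
  rewrite mulmx_sumr mulmx_suml; apply: eq_bigr => k _.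
  by rewrite -scalemxAr -scalemxAl !mulmxE -exprS -exprSr.
apply/matrixP => i j.
rewrite -[expm t A]/(\matrix_(i, j) limn (fun N => expm_sum t N i j)).
rewrite -limn_mulmxl -?limn_mulmxr; [|exact: expm_sum_cvg..].
by under eq_fun do rewrite sum_comm.
Qed.

Lemma is_derive_expm t : is_derive_mx t (fun s => expm s A) (A *m expm t A).
Proof.
move=> i j; under eq_fun do rewrite expmE.
have -> : (A *m expm t A) i j = limn (pseries (expm_coef 1 i j) t).
  have -> : pseries (expm_coef 1 i j) t = fun N => (A *m expm_sum t N) i j.
    by apply/funext => N; rewrite pseries_expm_coef expr1.
  by rewrite limn_mulmxl //; apply: expm_sum_cvg.
rewrite -pseries_diffs_expm_coef.
apply: (@pseries_snd_diffs _ _ (`|t| + 1)); rewrite ?pseries_diffs_expm_coef.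
- exact: expm_coef_cvg.
- exact: expm_coef_cvg.
- exact: expm_coef_cvg.
- by rewrite [ltRHS]ger0_norm ?addr_ge0 // ltrDl.
Qed.

Lemma continuous_expm i j : continuous (fun s => expm s A i j).
Proof.
by apply: is_derive_mx_continuous => t; exists (A *m expm t A); exact: is_derive_expm.
Qed.

Lemma expm0 : expm 0 A = 1%:M.
Proof.
apply/matrixP => i j; rewrite mxE; apply: lim_near_cst => //.
near=> N; have -> : N = N.-1.+1 by rewrite prednK //; near: N; exists 1%N.
rewrite /expm_sum big_ord_recl big1 ?addr0 => [|k _].
  by rewrite expr0 fact0 divr1 scale1r expr0.
by rewrite expr0n /= mul0r scale0r.
Unshelve. all: by end_near.
Qed.

Lemma is_derive_expmN t :
  is_derive_mx t (fun s => expm (- s) A) (- (A *m expm (- t) A)).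
Proof.
move=> i j; rewrite mxE.
have := is_derive1_comp (is_derive_expm (- t) i j) (is_deriveNid t 1).
by move=> D; apply: is_derive_eq D _; rewrite mulrN1.
Qed.

Lemma continuous_expmN i j : continuous (fun s => expm (- s) A i j).
Proof.
apply: is_derive_mx_continuous => t; exists (- (A *m expm (- t) A)).
exact: is_derive_expmN.
Qed.

Lemma expm_mulN t : expm t A *m expm (- t) A = 1%:M.
Proof.
apply/matrixP => i j.
have D0 s : is_derive s (1 : R) (fun s => (expm s A *m expm (- s) A) i j) 0.
  apply: is_derive_eq; first exact: is_derive_mx_mul (is_derive_expm s)
                                     (is_derive_expmN s) i j.
  by rewrite mulmxN mulmx_expmC mulmxA subrr mxE.
by rewrite (is_derive_0_is_cst t 0 D0) oppr0 expm0 mul1mx.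
Qed.

End MatrixExponential.

Section MatrixIntegral.
Context d (T : measurableType d) (R : realType).
Variables (mu : {measure set T -> \bar R}) (D : set T).
Hypothesis mD : measurable D.

Definition mx_integrable p q (M : T -> 'M[R]_(p, q)) :=
  forall i j, mu.-integrable D (EFin \o fun x => M x i j).

Definition mx_Rintegral p q (M : T -> 'M[R]_(p, q)) : 'M[R]_(p, q) :=
  \matrix_(i, j) Rintegral mu D (fun x => M x i j).

Lemma integrable_sum_EFin (I : Type) (r : seq I) (f : I -> T -> R) :
  (forall k, mu.-integrable D (EFin \o f k)) ->
  mu.-integrable D (EFin \o fun x => \sum_(k <- r) f k x).
Proof.
move=> intf.
have -> : EFin \o (fun x => \sum_(k <- r) f k x) = fun x => \sum_(k <- r) (f k x)%:E.
  by apply/funext => x; rewrite /= sumEFin.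
by apply: integrable_sum => // k _; apply: intf.
Qed.

Lemma integrableZl_EFin c (f : T -> R) :
  mu.-integrable D (EFin \o f) -> mu.-integrable D (EFin \o fun x => c * f x).
Proof.
move=> intf; have -> : EFin \o (fun x => c * f x) = fun x => (c%:E * (EFin \o f) x)%E.
  by apply/funext => x; rewrite /= EFinM.
exact: integrableZl.
Qed.

Lemma integrableD_EFin (f g : T -> R) :
  mu.-integrable D (EFin \o f) -> mu.-integrable D (EFin \o g) ->
  mu.-integrable D (EFin \o fun x => f x + g x).
Proof.
move=> intf intg; have -> : EFin \o (fun x => f x + g x) = (EFin \o f) \+ (EFin \o g).
  by apply/funext => x; rewrite /= EFinD.
exact: integrableD.
Qed.

Lemma Rintegral_sum (I : Type) (r : seq I) (f : I -> T -> R) :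
  (forall k, mu.-integrable D (EFin \o f k)) ->
  Rintegral mu D (fun x => \sum_(k <- r) f k x) = \sum_(k <- r) Rintegral mu D (f k).
Proof.
move=> intf; elim: r => [|k r IHr].
  by under eq_fun do rewrite big_nil; rewrite Rintegral_cst // mul0r big_nil.
under eq_fun do rewrite big_cons.
by rewrite RintegralD // ?big_cons ?IHr //; apply: integrable_sum_EFin.
Qed.

Lemma mulmx3E p q r s (P : 'M[R]_(p, q)) (N : 'M[R]_(q, r)) (Q : 'M[R]_(r, s)) i j :
  (P *m N *m Q) i j = \sum_(k < r) \sum_(l < q) (P i l * Q k j) * N l k.
Proof.
rewrite mxE; apply: eq_bigr => k _; rewrite mxE mulr_suml.
by apply: eq_bigr => l _; rewrite mulrAC.
Qed.

Lemma mx_integrable_mulmx p q r s (P : 'M[R]_(p, q)) (M : T -> 'M[R]_(q, r))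
    (Q : 'M[R]_(r, s)) :
  mx_integrable M -> mx_integrable (fun x => P *m M x *m Q).
Proof.
move=> intM i j; under eq_fun do rewrite mulmx3E.
apply: integrable_sum_EFin => k; apply: integrable_sum_EFin => l.
by apply: integrableZl_EFin.
Qed.

Lemma mx_Rintegral_mulmx p q r s (P : 'M[R]_(p, q)) (M : T -> 'M[R]_(q, r))
    (Q : 'M[R]_(r, s)) :
  mx_integrable M -> mx_Rintegral (fun x => P *m M x *m Q) = P *m mx_Rintegral M *m Q.
Proof.
move=> intM; apply/matrixP => i j; rewrite mulmx3E mxE.
under eq_fun do rewrite mulmx3E.
rewrite Rintegral_sum => [|k]; last first.
  by apply: integrable_sum_EFin => l; apply: integrableZl_EFin.
apply: eq_bigr => k _; rewrite Rintegral_sum => [|l]; last by apply: integrableZl_EFin.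
by apply: eq_bigr => l _; rewrite RintegralZl // mxE.
Qed.

Lemma Rintegral_mulmx p q r s (P : 'M[R]_(p, q)) (M : T -> 'M[R]_(q, r))
    (Q : 'M[R]_(r, s)) i j :
  mx_integrable M ->
  Rintegral mu D (fun x => (P *m M x *m Q) i j) = (P *m mx_Rintegral M *m Q) i j.
Proof. by move=> intM; rewrite -mx_Rintegral_mulmx // mxE. Qed.

End MatrixIntegral.

Section MatrixContinuity.
Variables (R : realType) (D : set R).

Definition mx_continuous_within p q (M : R -> 'M[R]_(p, q)) :=
  forall i j, {within D, continuous (fun s => M s i j)}.

Lemma mx_continuous_withinW p q (M : R -> 'M[R]_(p, q)) :
  (forall i j, continuous (fun s => M s i j)) -> mx_continuous_within M.
Proof. by move=> cM i j; exact: continuous_subspaceT. Qed.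

Lemma mx_continuous_within_cst p q (C : 'M[R]_(p, q)) :
  mx_continuous_within (fun=> C).
Proof. by apply: mx_continuous_withinW => i j; exact: cst_continuous. Qed.

Lemma mx_continuous_within_tr p q (M : R -> 'M[R]_(p, q)) :
  mx_continuous_within M -> mx_continuous_within (fun s => (M s)^T).
Proof. by move=> cM i j; under eq_fun do rewrite mxE; exact: cM. Qed.

Lemma mx_continuous_within_mul p q r (M : R -> 'M[R]_(p, q)) (N : R -> 'M[R]_(q, r)) :
  mx_continuous_within M -> mx_continuous_within N ->
  mx_continuous_within (fun s => M s *m N s).
Proof.
move=> cM cN i j; under eq_fun do rewrite mxE.
apply: continuous_big => [|l _]; first exact: add_continuous.
by move=> s; apply: continuousM; [exact: cM | exact: cN].
Qed.

End MatrixContinuity.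

Lemma mx_continuous_within_integrable (R : realType) (a b : R) p q
    (M : R -> 'M[R]_(p, q)) :
  mx_continuous_within `[a, b] M -> mx_integrable lebesgue_measure `[a, b] M.
Proof.
by move=> cM i j; apply: continuous_compact_integrable => //; exact: segment_compact.
Qed.

Lemma mxintE (R : realType) p q (xi : R) (f : R -> 'M[R]_(p, q)) :
  mxint xi f = mx_Rintegral lebesgue_measure `[0, xi] f.
Proof. by []. Qed.

Lemma mx_continuous_within_Zm (R : realType) n (A : 'M[R]_n) (t : R) :
  0 <= t -> mx_continuous_within `[0, t] (Zm A).
Proof.
move=> t_ge0 i j.
have -> : (fun s => Zm A s i j) =
    (fun s => parameterized_integral lebesgue_measure 0 s (fun r => expm (- r) A i j)).
  by apply/funext => s; rewrite /Zm mxintE mxE.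
apply: parameterized_integral_continuous => //.
apply: continuous_compact_integrable; first exact: segment_compact.
exact/continuous_subspaceT/continuous_expmN.
Qed.

Lemma Rintegral_is_derive (R : realType) (F f : R -> R) (a b : R) : a <= b ->
  (forall s, is_derive s (1 : R) F (f s)) -> {within `[a, b], continuous f} ->
  Rintegral lebesgue_measure `[a, b] f = F b - F a.
Proof.
move=> + DF cf; rewrite le_eqVlt => /predU1P[<-|ab].
  by rewrite set_itv1 Rintegral_set1 subrr.
have cF : continuous F.
  by move=> s; have [/derivable1_diffP/differentiable_continuous] := DF s.
rewrite /Rintegral (@continuous_FTC2 _ _ F _ _ ab cf) //.
- split; first by move=> s _; have [] := DF s.
  + exact: cvg_at_right_filter (cF a).
  + exact: cvg_at_left_filter (cF b).
- by move=> s _; rewrite derive1E; have [_ ->] := DF s.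
Qed.

Lemma mx_Rintegral_is_derive (R : realType) p q (F f : R -> 'M[R]_(p, q)) (a b : R) :
  a <= b -> (forall s, is_derive_mx s F (f s)) ->
  mx_continuous_within `[a, b] f ->
  mx_Rintegral lebesgue_measure `[a, b] f = F b - F a.
Proof.
move=> ab DF cf; apply/matrixP => i j; rewrite !mxE.
by apply: (@Rintegral_is_derive _ (fun s => F s i j)) => // s; exact: DF.
Qed.

Section VariationOfConstants.
Variables (R : realType) (n : nat) (A : 'M[R]_n) (b x0 : 'cV[R]_n) (x : R -> 'cV[R]_n).
Hypothesis x_0 : x 0 = x0.
Hypothesis x_derive : forall t, is_derive_mx t x (A *m x t + b).

Lemma is_derive_expmN_mul t :
  is_derive_mx t (fun s => expm (- s) A *m x s) (expm (- t) A *m b).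
Proof.
move=> i j; apply: is_derive_eq.
  exact: is_derive_mx_mul (is_derive_expmN A t) (x_derive t) i j.
by rewrite mulmxDr mulNmx mulmxA mulmx_expmC addKr.
Qed.

Lemma variation_of_constants t : 0 <= t -> x t = expm t A *m (x0 + Zm A t *m b).
Proof.
move=> t_ge0.
suff -> : x0 + Zm A t *m b = expm (- t) A *m x t by rewrite mulmxA expm_mulN mul1mx.
have -> : Zm A t *m b = mx_Rintegral lebesgue_measure `[0, t] (fun s => expm (- s) A *m b).
  rewrite /Zm mxintE -[LHS]mul1mx mulmxA -mx_Rintegral_mulmx //.
  - by congr mx_Rintegral; apply/funext => s; rewrite mul1mx.
  - exact/mx_continuous_within_integrable/mx_continuous_withinW/continuous_expmN.
rewrite (mx_Rintegral_is_derive t_ge0 is_derive_expmN_mul).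
- by rewrite oppr0 expm0 mul1mx x_0 addrC subrK.
- apply: mx_continuous_within_mul; last exact: mx_continuous_within_cst.
  exact/mx_continuous_withinW/continuous_expmN.
Qed.

End VariationOfConstants.

Section Vectorization.
Variable R : realType.

Lemma vecE m n (F : 'M[R]_(m, n)) a b : vec F (mxtens_index (a, b)) 0 = F b a.
Proof. by rewrite mxE mxtens_indexK. Qed.

Lemma vec_bij m n : bijective (@vec R m n).
Proof.
exists (fun f : 'cV[R]_(n * m) => \matrix_(i, j) f (mxtens_index (j, i)) 0).
  by move=> F; apply/matrixP => i j; rewrite mxE vecE.
move=> f; apply/matrixP => k l; rewrite [l]ord1.
by case: (mxtens_indexP k) => a b; rewrite vecE mxE.
Qed.

Lemma sum_mxtens_index m n (G : 'I_(m * n) -> R) :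
  \sum_(k < m * n) G k = \sum_(a < m) \sum_(b < n) G (mxtens_index (a, b)).
Proof.
rewrite pair_big (reindex (@mxtens_index m n)) /=; last first.
  by exists (@mxtens_unindex m n) => k _; rewrite (mxtens_indexK, mxtens_unindexK).
by apply: eq_bigr => -[a b].
Qed.

Lemma tensmx_mulmx_vec p q m n (M : 'M[R]_(p, n)) (N : 'M[R]_(q, m)) (X : 'M[R]_(m, n)) :
  (M *t N) *m vec X = vec (N *m X *m M^T).
Proof.
apply/matrixP => k l; rewrite [l]ord1.
case: (mxtens_indexP k) => a b; rewrite vecE !mxE sum_mxtens_index.
apply: eq_bigr => c _; rewrite !mxE mulr_suml; apply: eq_bigr => d _.
by rewrite tensmxE vecE; ring.
Qed.

Lemma vec_dot_trace m n (G F : 'M[R]_(m, n)) :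
  ((vec G)^T *m vec F) 0 0 = \tr (G^T *m F).
Proof.
rewrite mxE sum_mxtens_index; apply: eq_bigr => a _.
by rewrite mxE; apply: eq_bigr => b _; rewrite !mxE !mxtens_indexK.
Qed.

(* [set _ | _] is a classical set here, as in [nnz]. *)
Lemma card_set_bij (T1 T2 : finType) (h : T1 -> T2) (g : T2 -> T1)
    (P1 : pred T1) (P2 : pred T2) :
  cancel h g -> cancel g h -> (forall x, P2 (h x) = P1 x) ->
  #|[set x | P1 x]| = #|[set y | P2 y]|.
Proof.
move=> hK gK hP; rewrite -(card_imset _ (can_inj hK)) (can2_imset_pre _ hK gK).
by apply: eq_card => y; rewrite !inE !unfold_in /= !asboolb -hP gK.
Qed.

Lemma nnz_vec m n (F : 'M[R]_(m, n)) : nnz (vec F) = nnz F.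
Proof.
symmetry; apply: (@card_set_bij _ _
  (fun ij => (mxtens_index (ij.2, ij.1), ord0))
  (fun kl => ((mxtens_unindex kl.1).2, (mxtens_unindex kl.1).1))).
- by move=> [i j]; cbv beta; rewrite mxtens_indexK.
- move=> [k l]; rewrite [l]ord1; case: (mxtens_indexP k) => a b.
  by cbv beta; rewrite mxtens_indexK.
- by move=> [i j]; rewrite /= vecE.
Qed.

End Vectorization.

Section QuadraticForms.
Variable R : realType.

Lemma quadE n (M : 'M[R]_n) z : quad M z = \tr (z^T *m M *m z).
Proof. by rewrite trace_mx11. Qed.

Lemma quadD n (M N : 'M[R]_n) z : quad (M + N) z = quad M z + quad N z.
Proof. by rewrite !quadE mulmxDr mulmxDl mxtraceD. Qed.

Lemma quadB n (M N : 'M[R]_n) z : quad (M - N) z = quad M z - quad N z.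
Proof. by rewrite !quadE mulmxBr mulmxBl linearB. Qed.

Lemma quadZ n c (M : 'M[R]_n) z : quad (c *: M) z = c * quad M z.
Proof. by rewrite !quadE -scalemxAr -scalemxAl mxtraceZ. Qed.

Lemma quad_mulmx n p (M : 'M[R]_n) (N : 'M[R]_(n, p)) v :
  quad M (N *m v) = quad (N^T *m M *m N) v.
Proof. by rewrite /quad trmx_mul !mulmxA. Qed.

Lemma quad_addv n (P : 'M[R]_n) v w : P^T = P ->
  quad P (v + w) = quad P v + 2 * (v^T *m P *m w) 0 0 + quad P w.
Proof.
move=> P_sym; rewrite !quadE -trace_mx11 [(v + w)^T]raddfD /= !mulmxDl !mulmxDr !mxtraceD.
have -> : \tr (w^T *m P *m v) = \tr (v^T *m P *m w).
  by rewrite -mxtrace_tr !trmx_mul trmxK P_sym mulmxA.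
ring.
Qed.

Lemma vec_quad n m (x : 'cV[R]_n) (H : 'M[R]_m) (F : 'M[R]_(m, n)) :
  ((vec F)^T *m ((x *m x^T) *t H) *m vec F) 0 0 = quad H (F *m x).
Proof.
rewrite -mulmxA tensmx_mulmx_vec vec_dot_trace trmx_mul trmxK !mulmxA mxtrace_mulC.
by rewrite quad_mulmx quadE !mulmxA.
Qed.

Lemma vec_dot_outer n m (x : 'cV[R]_n) (N F : 'M[R]_(m, n)) :
  ((vec (N *m x *m x^T))^T *m vec F) 0 0 = ((N *m x)^T *m (F *m x)) 0 0.
Proof.
by rewrite vec_dot_trace trmx_mul trmxK -mulmxA mxtrace_mulC trace_mx11 mulmxA.
Qed.

Lemma nnz_tens_vec n m (x : 'cV[R]_n) (F : 'M[R]_(m, n)) :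
  nnz ((x^T *t (1%:M : 'M[R]_m)) *m vec F) = nnz (F *m x).
Proof. by rewrite tensmx_mulmx_vec mul1mx trmxK nnz_vec. Qed.

End QuadraticForms.

Lemma cost_gap_vec (R : realType) n m (B : 'M[R]_(n, m)) (E Z G0 P : 'M[R]_n)
    (G1 : 'M[R]_(n, m)) (G2 : 'M[R]_m) (xk : 'cV[R]_n) (F : 'M[R]_(m, n)) (alpha : R) :
  P^T = P ->
  quad G0 xk + 2 * (xk^T *m G1 *m (F *m xk)) 0 0 + quad G2 (F *m xk)
    - alpha * (quad P xk - quad P (E *m (xk + Z *m (B *m (F *m xk))))) =
  2^-1 * ((vec F)^T *m (2 *: ((xk *m xk^T)
            *t (G2 + alpha *: (B^T *m Z^T *m E^T *m P *m E *m Z *m B)))) *m vec F) 0 0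
  + ((2 *: vec ((G1^T + alpha *: (B^T *m Z^T *m E^T *m P *m E)) *m xk *m xk^T))^T
       *m vec F) 0 0
  + quad (G0 + alpha *: (E^T *m P *m E - P)) xk.
Proof.
move=> P_sym; set u := F *m xk.
have quad_state : quad P (E *m (xk + Z *m (B *m u))) = quad (E^T *m P *m E) xk
    + 2 * (xk^T *m (E^T *m P *m E *m Z *m B) *m u) 0 0
    + quad (B^T *m Z^T *m E^T *m P *m E *m Z *m B) u.
  by rewrite mulmxDr quad_addv // !quad_mulmx !trmx_mul !mulmxA /quad.
have cross_term : (((G1^T + alpha *: (B^T *m Z^T *m E^T *m P *m E)) *m xk)^T *m u) 0 0
    = (xk^T *m G1 *m u) 0 0 + alpha * (xk^T *m (E^T *m P *m E *m Z *m B) *m u) 0 0.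
  have trE (M : 'M[R]_(n, m)) : \tr (u^T *m (M^T *m xk)) = (xk^T *m M *m u) 0 0.
    by rewrite -mxtrace_tr !trmx_mul !trmxK mulmxA trace_mx11.
  have K_tr : B^T *m Z^T *m E^T *m P *m E = (E^T *m P *m E *m Z *m B)^T.
    by rewrite !trmx_mul !trmxK P_sym !mulmxA.
  rewrite -trace_mx11 -mxtrace_tr trmx_mul trmxK mulmxDl -scalemxAl mulmxDr -scalemxAr.
  by rewrite mxtraceD mxtraceZ K_tr !trE.
have scale11 c (X : 'M[R]_1) : (c *: X) 0 0 = c * X 0 0 by rewrite mxE.
rewrite -scalemxAr -scalemxAl scale11 vec_quad mulrA mulVf ?pnatr_eq0 // mul1r.
have dotC k (v w : 'cV[R]_k) : (v^T *m w) 0 0 = (w^T *m v) 0 0.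
  by rewrite -!trace_mx11 -mxtrace_tr trmx_mul trmxK.
rewrite dotC -scalemxAr scale11 dotC vec_dot_outer -/u cross_term quad_state.
rewrite !quadD !quadZ quadB; ring.
Qed.

Lemma fine_lebesgue_measure_itvcc (R : realType) (a b : R) :
  a <= b -> fine (lebesgue_measure `[a, b]) = b - a.
Proof.
rewrite le_eqVlt => /predU1P[<-|ab]; last by rewrite lebesgue_measure_itv /= lte_fin ab.
by rewrite lebesgue_measure_itv /= ltxx subrr.
Qed.

Lemma quad_continuous_within (R : realType) (D : set R) n (P : 'M[R]_n) (y : R -> 'cV[R]_n) :
  mx_continuous_within D y -> {within D, continuous (fun t => quad P (y t))}.
Proof.
move=> cy; have cP : mx_continuous_within D (fun=> P) by exact: mx_continuous_within_cst.
have cyP := mx_continuous_within_mul (mx_continuous_within_tr cy) cP.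
exact: mx_continuous_within_mul cyP cy 0 0.
Qed.

Section CostIntegrands.
Variables (R : realType) (n m : nat) (A : 'M[R]_n) (B : 'M[R]_(n, m)) (Q : 'M[R]_n).

Definition input_response t := expm t A *m Zm A t *m B.
Definition H0_integrand t := (expm t A)^T *m Q *m expm t A.
Definition H1_integrand t := H0_integrand t *m Zm A t *m B.
Definition H2_integrand t := (input_response t)^T *m Q *m input_response t.

Variable xi : R.
Hypothesis xi_ge0 : 0 <= xi.

Let cQ : mx_continuous_within `[0, xi] (fun=> Q).
Proof. exact: mx_continuous_within_cst. Qed.

Let cB : mx_continuous_within `[0, xi] (fun=> B).
Proof. exact: mx_continuous_within_cst. Qed.

Let cE : mx_continuous_within `[0, xi] (fun t => expm t A).
Proof. exact/mx_continuous_withinW/continuous_expm. Qed.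

Let cZ : mx_continuous_within `[0, xi] (Zm A).
Proof. exact: mx_continuous_within_Zm. Qed.

Let cH0 : mx_continuous_within `[0, xi] H0_integrand.
Proof.
exact: mx_continuous_within_mul (mx_continuous_within_mul (mx_continuous_within_tr cE) cQ) cE.
Qed.

Let cY : mx_continuous_within `[0, xi] input_response.
Proof. exact: mx_continuous_within_mul (mx_continuous_within_mul cE cZ) cB. Qed.

Lemma mx_integrable_H0_integrand : mx_integrable lebesgue_measure `[0, xi] H0_integrand.
Proof. exact: mx_continuous_within_integrable. Qed.

Lemma mx_integrable_H1_integrand : mx_integrable lebesgue_measure `[0, xi] H1_integrand.
Proof.
exact/mx_continuous_within_integrable/mx_continuous_within_mul/cB/mx_continuous_within_mul.
Qed.

Lemma mx_integrable_H2_integrand : mx_integrable lebesgue_measure `[0, xi] H2_integrand.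
Proof.
apply/mx_continuous_within_integrable/mx_continuous_within_mul/cY.
exact: mx_continuous_within_mul (mx_continuous_within_tr cY) cQ.
Qed.

End CostIntegrands.

Section ClosedLoopCost.
Variables (R : realType) (n m : nat) (A : 'M[R]_n) (B : 'M[R]_(n, m)).
Variables (Q : 'M[R]_n) (Rc : 'M[R]_m) (xk : 'cV[R]_n) (F : 'M[R]_(m, n)).
Variable x : R -> 'cV[R]_n.
Hypothesis Q_sym : Q^T = Q.
Hypothesis x_0 : x 0 = xk.
Hypothesis x_derive : forall t, is_derive_mx t x (A *m x t + B *m (F *m xk)).

Lemma quad_state_decomposition t : 0 <= t ->
  quad Q (x t) = quad (H0_integrand A Q t) xk
    + 2 * (xk^T *m H1_integrand A B Q t *m (F *m xk)) 0 0
    + quad (H2_integrand A B Q t) (F *m xk).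
Proof.
move=> t_ge0; rewrite (variation_of_constants x_0 x_derive t_ge0) mulmxDr.
rewrite [expm t A *m (Zm A t *m _)]mulmxA [expm t A *m Zm A t *m _]mulmxA quad_addv //.
rewrite !quad_mulmx /quad /H1_integrand /H0_integrand /H2_integrand /input_response.
by rewrite !trmx_mul !mulmxA.
Qed.

Lemma stage_cost_Rintegral xi : 0 <= xi ->
  Rintegral lebesgue_measure `[0, xi] (fun t => quad Q (x t) + quad Rc (F *m xk)) =
  quad (H0 A Q xi) xk + 2 * (xk^T *m H1 A B Q xi *m (F *m xk)) 0 0
  + quad (H2 A B Q Rc xi) (F *m xk).
Proof.
move=> xi_ge0; set u := F *m xk.
have iH0 : mx_integrable lebesgue_measure `[0, xi] (H0_integrand A Q).
  exact: mx_integrable_H0_integrand.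
have iH1 : mx_integrable lebesgue_measure `[0, xi] (H1_integrand A B Q).
  exact: mx_integrable_H1_integrand.
have iH2 : mx_integrable lebesgue_measure `[0, xi] (H2_integrand A B Q).
  exact: mx_integrable_H2_integrand.
set f0 := fun t => quad (H0_integrand A Q t) xk.
set f1 := fun t => 2 * (xk^T *m H1_integrand A B Q t *m u) 0 0.
set f2 := fun t => quad (H2_integrand A B Q t) u.
have i0 : lebesgue_measure.-integrable `[0, xi] (EFin \o f0).
  by apply: mx_integrable_mulmx.
have i1 : lebesgue_measure.-integrable `[0, xi] (EFin \o f1).
  by apply: integrableZl_EFin => //; apply: mx_integrable_mulmx.
have i2 : lebesgue_measure.-integrable `[0, xi] (EFin \o f2).
  by apply: mx_integrable_mulmx.
have i01 : lebesgue_measure.-integrable `[0, xi] (EFin \o fun t => f0 t + f1 t).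
  exact: integrableD_EFin.
have i012 : lebesgue_measure.-integrable `[0, xi] (EFin \o fun t => f0 t + f1 t + f2 t).
  exact: integrableD_EFin.
have ic : lebesgue_measure.-integrable `[0, xi] (EFin \o fun=> quad Rc u).
  apply: continuous_compact_integrable; first exact: segment_compact.
  by apply: continuous_subspaceT; exact: cst_continuous.
under eq_Rintegral => t /[!inE] /andP[t_ge0 _] do rewrite quad_state_decomposition //.
rewrite !RintegralD // RintegralZl //; last by apply: mx_integrable_mulmx.
rewrite Rintegral_cst // fine_lebesgue_measure_itvcc // subr0.
rewrite !(Rintegral_mulmx (mu := lebesgue_measure)) //.
by rewrite /H2 quadD quadZ [xi * _]mulrC addrA.
Qed.

End ClosedLoopCost.

Lemma le0_itvcc_itvco (R : realType) (g : R -> R) (delta : R) :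
  g 0 <= 0 -> (0 < delta -> {within `[0, delta], continuous g}) ->
  (forall xi, 0 <= xi <= delta -> g xi <= 0) <-> (forall xi, 0 <= xi < delta -> g xi <= 0).
Proof.
move=> g0 cg; split=> g_le0 xi /andP[xi_ge0 xi_le].
  by apply: g_le0; rewrite xi_ge0 ltW.
have [xi_lt|xi_ge] := ltP xi delta; first by apply: g_le0; rewrite xi_ge0.
have {xi_le xi_ge} xiE : xi = delta by apply/eqP; rewrite eq_le xi_le xi_ge.
move: xi_ge0; rewrite {}xiE le_eqVlt => /predU1P[<- //|d_gt0].
have [_ _ g_left] := (continuous_within_itvP g d_gt0).1 (cg d_gt0).
apply: (cvgr_to_le g_left); near=> y; apply: g_le0.
by apply/andP; split; near: y; [exact: nbhs_left_ge | exact: nbhs_left_lt].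
Unshelve. all: by end_near.
Qed.

Section ClosedLoopGap.
Variables (R : realType) (n m : nat) (A : 'M[R]_n) (B : 'M[R]_(n, m)).
Variables (Q P : 'M[R]_n) (Rc : 'M[R]_m) (xk : 'cV[R]_n) (F : 'M[R]_(m, n)).
Variables (alpha delta : R) (x : R -> 'cV[R]_n).
Hypothesis x_derive : forall t, is_derive_mx t x (A *m x t + B *m (F *m xk)).

Lemma cost_gap_continuous : 0 <= delta ->
  {within `[0, delta], continuous (fun xi =>
    Rintegral lebesgue_measure `[0, xi] (fun t => quad Q (x t) + quad Rc (F *m xk))
    - alpha * (quad P xk - quad P (x xi)))}.
Proof.
move=> delta_ge0.
have cx : mx_continuous_within `[0, delta] x.
  apply/mx_continuous_withinW/is_derive_mx_continuous => t.
  by exists (A *m x t + B *m (F *m xk)).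
have cquad (M : 'M[R]_n) : {within `[0, delta], continuous (fun t => quad M (x t))}.
  exact: quad_continuous_within.
have ccst (c : R) : {within `[0, delta], continuous (fun=> c)}.
  exact/continuous_subspaceT/cst_continuous.
have cstage : {within `[0, delta], continuous (fun t => quad Q (x t) + quad Rc (F *m xk))}.
  by move=> t; exact: continuousD (cquad Q t) (ccst _ t).
move=> t; apply: continuousB (continuousM (ccst alpha t) (continuousB (ccst _ t) (cquad P t))).
apply: (parameterized_integral_continuous delta_ge0) => //.
by apply: continuous_compact_integrable => //; exact: segment_compact.
Qed.

End ClosedLoopGap.

Unset Implicit Arguments.
Set Strict Implicit.
Set Printing Implicit Defensive.

Theorem theorem3 (R : realType) (n m : nat)
  (A : 'M[R]_n) (B : 'M[R]_(n, m)) (Q : 'M[R]_n) (Rc : 'M[R]_m)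
  (alpha gamma eta : R) (xk : 'cV[R]_n)
  (Ft : 'M[R]_(m, n)) (Pt : 'M[R]_n)
  (x : 'M[R]_(m, n) -> R -> 'cV[R]_n) :
  stabilizable A B -> posdef Q -> posdef Rc ->
  1 < alpha -> 0 <= gamma -> 0 <= eta ->
  hurwitz (A + B *m Ft) -> posdef Pt ->
  (A + B *m Ft)^T *m Pt + Pt *m (A + B *m Ft) + Q + Ft^T *m Rc *m Ft = 0 ->
  (* x F s = state at time t_k + s under the constant input u = F x_k *)
  (forall F : 'M[R]_(m, n), x F 0 = xk /\
     forall (t : R) (i : 'I_n),
       is_derive t 1 (fun s => x F s i 0) ((A *m x F t + B *m (F *m xk)) i 0)) ->
  let V := fun z : 'cV[R]_n => quad Pt z in
  let J := fun (F : 'M[R]_(m, n)) (xi : R) =>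
    Rintegral (@lebesgue_measure R) `[0, xi]
      (fun t => quad Q (x F t) + quad Rc (F *m xk)) in
  let E := fun xi : R => expm xi A in
  let P1 := fun xi : R =>
    2 *: ((xk *m xk^T) *t (H2 A B Q Rc xi
       + alpha *: (B^T *m (Zm A xi)^T *m (E xi)^T *m Pt *m E xi *m Zm A xi *m B))) in
  let q1 := fun xi : R =>
    2 *: vec (((H1 A B Q xi)^T
       + alpha *: (B^T *m (Zm A xi)^T *m (E xi)^T *m Pt *m E xi)) *m xk *m xk^T) in
  let r1 := fun xi : R =>
    quad (H0 A Q xi + alpha *: ((E xi)^T *m Pt *m E xi - Pt)) xk in
  let feas1 := fun (F : 'M[R]_(m, n)) (delta : R) =>
    forall xi : R, 0 <= xi <= delta -> J F xi <= alpha * (V xk - V (x F xi)) in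
  let feas2 := fun (f : 'cV[R]_(n * m)) (delta : R) =>
    forall xi : R, 0 <= xi < delta ->
      2^-1 * (f^T *m P1 xi *m f) 0 0 + ((q1 xi)^T *m f) 0 0 + r1 xi <= 0 in
  let obj1 := fun (F : 'M[R]_(m, n)) (delta : R) =>
    - delta + gamma * (nnz F)%:R + eta * (nnz (F *m xk))%:R in
  let obj2 := fun (f : 'cV[R]_(n * m)) (delta : R) =>
    - delta + gamma * (nnz f)%:R
      + eta * (nnz ((xk^T *t (1%:M : 'M[R]_m)) *m f))%:R in
  bijective (@vec R m n) /\
  forall (F : 'M[R]_(m, n)) (delta : R),
    (feas1 F delta <-> feas2 (vec F) delta) /\
    obj1 F delta = obj2 (vec F) delta.
Proof.
move=> _ [Q_sym _] _ _ _ _ _ [P_sym _] _ x_sol V J E P1 q1 r1 feas1 feas2 obj1 obj2.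
split=> [|F delta]; first exact: vec_bij.
split; last by rewrite /obj1 /obj2 nnz_vec nnz_tens_vec.
have [x_0 x_der] := x_sol F.
have x_derive t : is_derive_mx t (x F) (A *m x F t + B *m (F *m xk)).
  by move=> i j; rewrite [j]ord1; exact: x_der.
pose gap xi := J F xi - alpha * (V xk - V (x F xi)).
have gapE xi : 0 <= xi ->
    gap xi = 2^-1 * ((vec F)^T *m P1 xi *m vec F) 0 0 + ((q1 xi)^T *m vec F) 0 0 + r1 xi.
  move=> xi_ge0; rewrite /gap /J (@stage_cost_Rintegral _ _ _ A B) //.
  by rewrite /V (variation_of_constants x_0 x_derive xi_ge0) cost_gap_vec.
have gap0 : gap 0 <= 0.
  by rewrite /gap /J set_itv1 Rintegral_set1 x_0 subrr mulr0 subrr.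
have [cc_to_co co_to_cc] : (forall xi, 0 <= xi <= delta -> gap xi <= 0) <->
                           (forall xi, 0 <= xi < delta -> gap xi <= 0).
  apply: le0_itvcc_itvco gap0 _ => d_gt0.
  exact: cost_gap_continuous x_derive (ltW d_gt0).
split=> feasF xi /[dup] xi_in /andP[xi_ge0 _].
- rewrite -gapE //; apply: (cc_to_co _ xi xi_in) => zeta zeta_in.
  by rewrite subr_le0; exact: feasF.
- rewrite -subr_le0; apply: (co_to_cc _ xi xi_in) => zeta /[dup] zeta_in /andP[zeta_ge0 _].
  by rewrite gapE //; exact: feasF.
Qed.
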